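(* Let $G=(V,E,m,w)$ be a weighted graph admitting an intrinsic metric $\rho$ with finite balls and finite jump size $s=\sup_{x\sim y}\rho(x,y)$. Suppose $G$ has polynomial volume growth: there are $x_0\in V$ and constants $\alpha, C$ with $m(B_R(x_0))\le C(1+R)^{\alpha}$ for all $R>0$. Let $k>0$ and $u\in\mathcal{P}_k(G)$. Then for any $q\in\mathbb{N}$ with $4q>2k+\alpha+2$, $\partial_t^q u\equiv 0$. In particular, there exist functions $p_i$ on $V$, $0\le i\le q-1$, such that $u(x,t)=\sum_{i=0}^{q-1}p_i(x)t^i$.
   Context: A weighted graph $G=(V,E,m,w)$ consists of a locally finite, simple, undirected, connected graph $(V,E)$, a symmetric edge weight $w:E\to(0,\infty)$, and a vertex weight $m:V\to(0,\infty)$; $m(\Omega)=\sum_{x\in\Omega}m_x$. The Laplacian is $\Delta f(x)=\sum_{y\sim x}\frac{w_{xy}}{m_x}(f(y)-f(x))$. A (pseudo)metric $\rho$ on $V$ is intrinsic if $\sum_{y\sim x}w_{xy}\rho^2(x,y)\le m_x$ for all $x$; $B_R(x)=\{y:\rho(y,x)\le R\}$. An ancient solution is a function $u(x,t)$ on $V\times(-\infty,0]$, (infinitely) differentiable in $t$, with $\partial_t u=\Delta u$. $\mathcal{P}_k(G)$ is the space of ancient solutions $u$ for which there are $x_0\in V$ and $C_u$ with $\sup_{B_R(x_0)\times[-R^2,0]}|u|\le C_u(1+R)^k$ for all $R>0$. *)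

From Stdlib Require Import Reals Lra List Relations.
From Coquelicot Require Import Coquelicot.
Open Scope R_scope.

Definition sumL (l : list R) : R := fold_right Rplus 0 l.

(* A weighted graph G = (V,E,m,w).  Local finiteness is built in: the
   neighbourhood of x is the finite duplicate-free list [nbr x]. *)
Record wgraph (V : Type) := WGraph {
  nbr : V -> list V;
  wt : V -> V -> R;
  ms : V -> R;
  nbr_nodup : forall x, NoDup (nbr x);
  nbr_sym : forall x y, In y (nbr x) -> In x (nbr y);
  nbr_irrefl : forall x, ~ In x (nbr x);
  nbr_conn : forall x y,
      clos_refl_trans V (fun a b => In b (nbr a)) x y;
  wt_sym : forall x y, wt x y = wt y x;
  wt_pos : forall x y, In y (nbr x) -> 0 < wt x y;
  ms_pos : forall x, 0 < ms x
}.
Arguments nbr {V}. Arguments wt {V}. Arguments ms {V}.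

Definition adj {V} (G : wgraph V) (x y : V) : Prop := In y (nbr G x).

Definition laplacian {V} (G : wgraph V) (f : V -> R) (x : V) : R :=
  sumL (map (fun y => wt G x y / ms G x * (f y - f x)) (nbr G x)).

Definition pseudometric {V} (rho : V -> V -> R) : Prop :=
  (forall x y, 0 <= rho x y) /\ (forall x, rho x x = 0) /\
  (forall x y, rho x y = rho y x) /\
  (forall x y z, rho x z <= rho x y + rho y z).

Definition intrinsic {V} (G : wgraph V) (rho : V -> V -> R) : Prop :=
  pseudometric rho /\
  forall x, sumL (map (fun y => wt G x y * (rho x y)^2) (nbr G x)) <= ms G x.

Definition ball_enum {V} (rho : V -> V -> R) (x : V) (Rr : R) (l : list V) : Prop :=
  NoDup l /\ forall y, In y l <-> rho y x <= Rr.

Definition finite_balls {V} (rho : V -> V -> R) : Prop :=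
  forall x Rr, exists l, ball_enum rho x Rr l.

(* m(Ω) for a finite set Ω given by a duplicate-free enumeration. *)
Definition mass {V} (G : wgraph V) (l : list V) : R := sumL (map (ms G) l).

Definition finite_jump {V} (G : wgraph V) (rho : V -> V -> R) : Prop :=
  exists s, forall x y, adj G x y -> rho x y <= s.

Definition poly_growth_with {V} (G : wgraph V) (rho : V -> V -> R)
  (alpha : R) : Prop :=
  exists (x0 : V) (C : R), forall Rr l, 0 < Rr ->
    ball_enum rho x0 Rr l -> mass G l <= C * Rpower (1 + Rr) alpha.

Definition is_left_derive (f : R -> R) (t l : R) : Prop :=
  filterlim (fun h => (f (t + h) - f t) / h) (at_left 0) (locally l).

(* Ancient solution: u : V -> (-∞,0] -> R (values for t > 0 are irrelevant),
   ∂_t u = Δu on V × (-∞,0]; at t = 0 the derivative is one-sided. *)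
Definition ancient {V} (G : wgraph V) (u : V -> R -> R) : Prop :=
  forall x,
    (forall t, t < 0 -> is_derive (u x) t (laplacian G (fun y => u y t) x)) /\
    is_left_derive (u x) 0 (laplacian G (fun y => u y 0) x).

Definition in_Pk {V} (G : wgraph V) (rho : V -> V -> R) (k : R)
  (u : V -> R -> R) : Prop :=
  ancient G u /\
  exists (x0 : V) (Cu : R), forall Rr, 0 < Rr ->
    forall y t, rho y x0 <= Rr -> - Rr^2 <= t <= 0 ->
      Rabs (u y t) <= Cu * Rpower (1 + Rr) k.

From Stdlib Require Import Reals List Lra Psatz Classical ClassicalEpsilon.
From Coquelicot Require Import Coquelicot.
Open Scope R_scope.

(* Along the heat flow [v_t = Δv], two discrete Caccioppoli inequalities with cut-offs of
   width [r] (the intrinsic metric makes their energy density at most [1/r^2]) bound first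
   the space-time [L^2] norm of [grad v] and then that of [v_t = Δv] on a slightly smaller
   parabolic cylinder by [r^-2], resp. [r^-4], times the [L^2] norm of [v].  Applying this
   [q] times to [u], [Δu], ..., [Δ^(q-1) u] on cylinders of radius [R], with [r] of order
   [R], gives [|Δ^q u(x,t)|^2 m_x <= C R^(2k+α+2) R^(-4q-2)], which tends to 0 as [R -> ∞].
   Hence [∂_t^q u = Δ^q u = 0] for [t < 0], so [u(x,.)] is a polynomial of degree [< q] on
   [t < 0], and also at [t = 0] by left continuity. *)

Lemma sumL_app (l1 l2 : list R) : sumL (l1 ++ l2) = sumL l1 + sumL l2.
Proof. induction l1; simpl; [lra | rewrite IHl1; lra]. Qed.

Lemma sumL_map_add {A} (f g : A -> R) l :
  sumL (map (fun x => f x + g x) l) = sumL (map f l) + sumL (map g l).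
Proof. induction l; simpl; [lra | rewrite IHl; lra]. Qed.

Lemma sumL_map_scal {A} c (f : A -> R) l :
  sumL (map (fun x => c * f x) l) = c * sumL (map f l).
Proof. induction l; simpl; [lra | rewrite IHl; lra]. Qed.

Lemma sumL_map_ext_in {A} (f g : A -> R) l :
  (forall x, In x l -> f x = g x) -> sumL (map f l) = sumL (map g l).
Proof.
  induction l; simpl; intros H; [lra |].
  rewrite H, IHl by auto. reflexivity.
Qed.

Lemma sumL_map_le {A} (f g : A -> R) l :
  (forall x, In x l -> f x <= g x) -> sumL (map f l) <= sumL (map g l).
Proof.
  induction l; simpl; intros H; [lra |].
  assert (sumL (map f l) <= sumL (map g l)) by auto.
  specialize (H a (or_introl eq_refl)). lra.
Qed.

Lemma sumL_map_eq0 {A} (f : A -> R) l : (forall x, In x l -> f x = 0) -> sumL (map f l) = 0.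
Proof.
  intros H. transitivity (sumL (map (fun _ => 0) l)); [now apply sumL_map_ext_in |].
  clear H. induction l; simpl; lra.
Qed.

Lemma sumL_map_nonneg {A} (f : A -> R) l : (forall x, In x l -> 0 <= f x) -> 0 <= sumL (map f l).
Proof.
  intros H. rewrite <- (sumL_map_eq0 (fun _ => 0) l) by auto.
  now apply sumL_map_le.
Qed.

Lemma sumL_map_swap {A B} (h : A -> B -> R) l l' :
  sumL (map (fun x => sumL (map (fun y => h x y) l')) l) =
  sumL (map (fun y => sumL (map (fun x => h x y) l)) l').
Proof.
  induction l as [|a l IH]; simpl.
  - symmetry. now apply sumL_map_eq0.
  - rewrite IH, <- sumL_map_add. reflexivity.
Qed.

Lemma sumL_map_eq_off_common {A} (g : A -> R) l1 l2 :
  NoDup l1 -> NoDup l2 ->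
  (forall y, In y l1 -> ~ In y l2 -> g y = 0) ->
  (forall y, In y l2 -> ~ In y l1 -> g y = 0) ->
  sumL (map g l1) = sumL (map g l2).
Proof.
  revert l2. induction l1 as [|a l1 IH]; intros l2 N1 N2 H1 H2.
  - symmetry. apply sumL_map_eq0. intros y Hy. apply H2; auto.
  - inversion N1 as [|? ? Na N1']; subst. simpl.
    destruct (classic (In a l2)) as [Ha | Ha].
    + destruct (in_split a l2 Ha) as [La [Lb ->]].
      assert (N3 : NoDup (La ++ Lb)) by (eapply NoDup_remove_1; eauto).
      assert (Nb : ~ In a (La ++ Lb)) by (eapply NoDup_remove_2; eauto).
      rewrite (IH (La ++ Lb)); auto.
      * rewrite !map_app, !sumL_app. simpl. lra.
      * intros y Hy Hn. apply H1; [now right |].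
        rewrite in_app_iff in *; simpl; intuition congruence.
      * intros y Hy Hn. apply H2; [rewrite in_app_iff in *; simpl; tauto |].
        simpl; intuition congruence.
    + rewrite (H1 a) by (simpl; auto).
      rewrite (IH l2); auto.
      * lra.
      * intros y Hy Hn. apply H1; [now right | auto].
      * intros y Hy Hn. apply H2; [auto |]. simpl; intuition congruence.
Qed.

Lemma sumL_map_incl_le {A} (g : A -> R) S L :
  NoDup S -> incl S L -> (forall y, In y L -> 0 <= g y) ->
  sumL (map g S) <= sumL (map g L).
Proof.
  revert L. induction S as [|a S IH]; intros L NS HS Hg.
  - now apply sumL_map_nonneg.
  - inversion NS as [|? ? Na NS']; subst.
    destruct (in_split a L (HS a (or_introl eq_refl))) as [La [Lb ->]].
    assert (sumL (map g S) <= sumL (map g (La ++ Lb))).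
    { apply IH; auto; intros y Hy.
      - assert (Hy' := HS y (or_intror Hy)).
        rewrite in_app_iff in *; simpl in *; intuition congruence.
      - apply Hg. rewrite in_app_iff in *; simpl; tauto. }
    rewrite map_app, sumL_app in *. simpl. lra.
Qed.

Section EdgeSums.
Context {V : Type} (G : wgraph V).

Lemma adj_sym x y : adj G x y -> adj G y x.
Proof. apply nbr_sym. Qed.

Lemma wt_nonneg x y : adj G x y -> 0 <= wt G x y.
Proof. intros H. left. now apply wt_pos. Qed.

Lemma laplacian_mul_ms g x :
  laplacian G g x * ms G x = sumL (map (fun y => wt G x y * (g y - g x)) (nbr G x)).
Proof.
  unfold laplacian.
  rewrite (sumL_map_ext_in _ (fun y => / ms G x * (wt G x y * (g y - g x))))
    by (intros; unfold Rdiv; ring).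
  rewrite sumL_map_scal. assert (ms G x > 0) by apply ms_pos. field. lra.
Qed.

Definition edge_sum (L : list V) (h : V -> V -> R) : R :=
  sumL (map (fun x => sumL (map (fun y => h x y) (nbr G x))) L).

Definition indicator (P : Prop) (c : R) : R :=
  if excluded_middle_informative P then c else 0.

Lemma sum_nbr_indicator (F : V -> R) x L :
  NoDup L -> (forall y, adj G x y -> F y <> 0 -> In y L) ->
  sumL (map F (nbr G x)) = sumL (map (fun y => indicator (adj G x y) (F y)) L).
Proof.
  intros NL H.
  rewrite (sumL_map_ext_in F (fun y => indicator (adj G x y) (F y)))
    by (intros y Hy; unfold indicator; now destruct excluded_middle_informative).
  apply sumL_map_eq_off_common; auto using nbr_nodup; intros y Hy Hn;
    unfold indicator; destruct excluded_middle_informative as [Ha |]; auto.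
  - destruct (Req_dec (F y) 0); auto. exfalso. auto.
  - contradiction.
Qed.

Lemma edge_sum_swap L h :
  NoDup L -> (forall x y, adj G x y -> h x y <> 0 -> In x L /\ In y L) ->
  edge_sum L h = edge_sum L (fun x y => h y x).
Proof.
  intros NL H. unfold edge_sum.
  rewrite (sumL_map_ext_in _ (fun x => sumL (map (fun y => indicator (adj G x y) (h x y)) L)))
    by (intros; apply sum_nbr_indicator; auto; intros y Ha Hn; apply (H _ _ Ha Hn)).
  rewrite (sumL_map_ext_in (fun x => sumL (map (fun y => h y x) (nbr G x)))
             (fun x => sumL (map (fun y => indicator (adj G x y) (h y x)) L)))
    by (intros; apply sum_nbr_indicator; auto; intros y Ha Hn;
        apply (H _ _ (adj_sym _ _ Ha) Hn)).
  rewrite (sumL_map_swap (fun x y => indicator (adj G x y) (h y x))).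
  apply sumL_map_ext_in. intros x _. apply sumL_map_ext_in. intros y _.
  unfold indicator.
  destruct excluded_middle_informative as [Hxy|Hxy], excluded_middle_informative as [Hyx|Hyx];
    auto; exfalso; auto using adj_sym.
Qed.

Lemma edge_sum_add L h1 h2 :
  edge_sum L (fun x y => h1 x y + h2 x y) = edge_sum L h1 + edge_sum L h2.
Proof.
  unfold edge_sum. rewrite <- sumL_map_add.
  apply sumL_map_ext_in. intros. apply sumL_map_add.
Qed.

Lemma edge_sum_scal L c h : edge_sum L (fun x y => c * h x y) = c * edge_sum L h.
Proof.
  unfold edge_sum. rewrite <- sumL_map_scal.
  apply sumL_map_ext_in. intros. apply sumL_map_scal.
Qed.

Lemma edge_sum_le L h1 h2 :
  (forall x y, In x L -> adj G x y -> h1 x y <= h2 x y) -> edge_sum L h1 <= edge_sum L h2.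
Proof.
  intros H. apply sumL_map_le. intros x Hx. apply sumL_map_le. intros y Hy. auto.
Qed.

Lemma edge_sum_ext L h1 h2 :
  (forall x y, In x L -> adj G x y -> h1 x y = h2 x y) -> edge_sum L h1 = edge_sum L h2.
Proof.
  intros H. apply sumL_map_ext_in. intros x Hx. apply sumL_map_ext_in. intros y Hy. auto.
Qed.

Lemma edge_sum_nonneg L h :
  (forall x y, In x L -> adj G x y -> 0 <= h x y) -> 0 <= edge_sum L h.
Proof.
  intros H. apply sumL_map_nonneg. intros x Hx. apply sumL_map_nonneg. intros y Hy. auto.
Qed.

Lemma edge_sum_incl_le S L h :
  NoDup S -> incl S L -> (forall x y, In x L -> adj G x y -> 0 <= h x y) ->
  edge_sum S h <= edge_sum L h.
Proof.
  intros NS HS H. apply sumL_map_incl_le; auto. intros x Hx.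
  apply sumL_map_nonneg. intros y Hy. auto.
Qed.

End EdgeSums.

Definition clamp01 (a : R) : R := Rmin 1 (Rmax 0 a).

Lemma clamp01_bounds a : 0 <= clamp01 a <= 1.
Proof. unfold clamp01, Rmin, Rmax. repeat destruct Rle_dec; lra. Qed.

Lemma clamp01_lip a b : Rabs (clamp01 a - clamp01 b) <= Rabs (a - b).
Proof.
  unfold clamp01, Rmin, Rmax.
  repeat destruct Rle_dec; unfold Rabs; repeat destruct Rcase_abs; lra.
Qed.

Section Cutoffs.
Context {V : Type} (G : wgraph V) (rho : V -> V -> R).

Definition ramp (o : V) (c r : R) (x : V) : R := clamp01 ((c + r - rho x o) / r).

Lemma ramp_eq1 o c r x : 0 < r -> rho x o <= c -> ramp o c r x = 1.
Proof.
  intros Hr H. unfold ramp, clamp01, Rmin, Rmax.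
  assert (1 <= (c + r - rho x o) / r) by (apply Rle_div_r; lra).
  repeat destruct Rle_dec; lra.
Qed.

Lemma ramp_neq0 o c r x : 0 < r -> ramp o c r x <> 0 -> rho x o < c + r.
Proof.
  intros Hr H. destruct (Rlt_dec (rho x o) (c + r)) as [| Hn]; auto.
  exfalso. apply H. unfold ramp, clamp01, Rmin, Rmax.
  assert ((c + r - rho x o) / r <= 0) by (apply Rle_div_l; lra).
  repeat destruct Rle_dec; lra.
Qed.

Lemma rho_dist_le o x y : pseudometric rho -> Rabs (rho x o - rho y o) <= rho x y.
Proof.
  intros (_ & _ & Hs & Ht).
  pose proof (Ht x y o). pose proof (Ht y x o). rewrite (Hs y x) in *.
  unfold Rabs; destruct Rcase_abs; lra.
Qed.

Lemma ramp_lip o c r x y : pseudometric rho -> 0 < r ->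
  (ramp o c r y - ramp o c r x) ^ 2 <= / r ^ 2 * rho x y ^ 2.
Proof.
  intros Hp Hr. unfold ramp.
  assert (Hc := clamp01_lip ((c + r - rho y o) / r) ((c + r - rho x o) / r)).
  replace ((c + r - rho y o) / r - (c + r - rho x o) / r)
    with ((rho x o - rho y o) / r) in Hc by (field; lra).
  rewrite Rabs_div, (Rabs_right r) in Hc by lra.
  assert (Hd := rho_dist_le o x y Hp).
  assert (Rabs (rho x o - rho y o) / r <= rho x y / r)
    by (apply Rmult_le_compat_r; [apply Rlt_le, Rinv_0_lt_compat |]; lra).
  rewrite <- pow2_abs. replace (/ r ^ 2 * rho x y ^ 2) with ((rho x y / r) ^ 2) by (field; lra).
  apply pow_incr. split; [apply Rabs_pos | lra].
Qed.

Record cutoff (S L : list V) (chi : V -> R) (K : R) : Prop := {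
  cutoff_nodup_in : NoDup S;
  cutoff_nodup_out : NoDup L;
  cutoff_incl : incl S L;
  cutoff_bounds : forall x, 0 <= chi x <= 1;
  cutoff_eq1 : forall x, In x S -> chi x = 1;
  cutoff_support : forall x, chi x <> 0 -> In x L;
  cutoff_gradient : forall x,
    sumL (map (fun y => wt G x y * (chi y - chi x) ^ 2) (nbr G x)) <= K * ms G x
}.

Definition collared (S L : list V) (chi : V -> R) : Prop :=
  (forall x y, In x S -> adj G x y -> chi y = 1) /\
  (forall x y, adj G x y -> chi x <> 0 -> In y L).

Lemma ramp_gradient o c r x : intrinsic G rho -> 0 < r ->
  sumL (map (fun y => wt G x y * (ramp o c r y - ramp o c r x) ^ 2) (nbr G x))
  <= / r ^ 2 * ms G x.
Proof.
  intros [Hp Hi] Hr.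
  apply Rle_trans with (sumL (map (fun y => / r ^ 2 * (wt G x y * rho x y ^ 2)) (nbr G x))).
  - apply sumL_map_le. intros y Hy.
    assert (0 <= wt G x y) by (apply wt_nonneg; exact Hy).
    assert (Hl := ramp_lip o c r x y Hp Hr). nra.
  - rewrite sumL_map_scal. apply Rmult_le_compat_l; [| apply Hi].
    apply Rlt_le, Rinv_0_lt_compat. nra.
Qed.

Lemma ramp_cutoff o a b c r S L : intrinsic G rho -> 0 < r ->
  ball_enum rho o a S -> ball_enum rho o b L -> a <= c -> c + r <= b ->
  cutoff S L (ramp o c r) (/ r ^ 2).
Proof.
  intros Hi Hr [NS HS] [NL HL] Hac Hcb. split; auto.
  - intros y Hy. apply HL. apply HS in Hy. lra.
  - intros; apply clamp01_bounds.
  - intros x Hx. apply ramp_eq1; auto. apply HS in Hx. lra.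
  - intros x Hx. apply ramp_neq0 in Hx; auto. apply HL. lra.
  - intros x. now apply ramp_gradient.
Qed.

Lemma rho_adj_le s o x y : pseudometric rho ->
  (forall x y, adj G x y -> rho x y <= s) -> adj G x y -> rho y o <= s + rho x o.
Proof.
  intros (_ & _ & Hs & Ht) Hj Ha.
  specialize (Ht y x o). rewrite (Hs y x) in Ht. specialize (Hj x y Ha). lra.
Qed.

Lemma ramp_collared s o a b c r S L : pseudometric rho ->
  (forall x y, adj G x y -> rho x y <= s) -> 0 < r ->
  ball_enum rho o a S -> ball_enum rho o b L -> a + s <= c -> c + r + s <= b ->
  collared S L (ramp o c r).
Proof.
  intros Hp Hj Hr [_ HS] [_ HL] Hac Hcb. split.
  - intros x y Hx Ha. apply HS in Hx. apply ramp_eq1; auto.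
    assert (T := rho_adj_le s o x y Hp Hj Ha). lra.
  - intros x y Ha Hx. apply ramp_neq0 in Hx; auto. apply HL.
    assert (T := rho_adj_le s o x y Hp Hj Ha). lra.
Qed.

End Cutoffs.

Arguments cutoff_nodup_in {V G S L chi K}.
Arguments cutoff_nodup_out {V G S L chi K}.
Arguments cutoff_incl {V G S L chi K}.
Arguments cutoff_bounds {V G S L chi K}.
Arguments cutoff_eq1 {V G S L chi K}.
Arguments cutoff_support {V G S L chi K}.
Arguments cutoff_gradient {V G S L chi K}.

Section Energies.
Context {V : Type} (G : wgraph V).

Definition l2 (L : list V) (g : V -> R) : R :=
  sumL (map (fun x => ms G x * g x ^ 2) L).

Definition dirichlet (S : list V) (g : V -> R) : R :=
  edge_sum G S (fun x y => wt G x y * (g y - g x) ^ 2).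

Definition cut_inner (L : list V) (chi g h : V -> R) : R :=
  sumL (map (fun x => ms G x * chi x ^ 2 * (g x * h x)) L).

Definition cut_form (S : list V) (phi g h : V -> R) : R :=
  edge_sum G S (fun x y => wt G x y * phi x * phi y * ((g y - g x) * (h y - h x))).

Lemma l2_nonneg L g : 0 <= l2 L g.
Proof.
  apply sumL_map_nonneg. intros x _.
  apply Rmult_le_pos; [apply Rlt_le, ms_pos | apply pow2_ge_0].
Qed.

Lemma dirichlet_nonneg S g : 0 <= dirichlet S g.
Proof.
  apply edge_sum_nonneg. intros x y _ Ha.
  apply Rmult_le_pos; [now apply wt_nonneg | apply pow2_ge_0].
Qed.

Lemma cut_inner_le_l2 L chi g :
  (forall x, 0 <= chi x <= 1) -> cut_inner L chi g g <= l2 L g.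
Proof.
  intros Hb. apply sumL_map_le. intros x _.
  assert (0 < ms G x) by apply ms_pos. destruct (Hb x).
  assert (chi x ^ 2 <= 1) by nra.
  assert (0 <= ms G x * (g x * g x)) by (apply Rmult_le_pos; nra).
  replace (ms G x * chi x ^ 2 * (g x * g x)) with (chi x ^ 2 * (ms G x * (g x * g x))) by ring.
  replace (ms G x * g x ^ 2) with (1 * (ms G x * (g x * g x))) by ring.
  apply Rmult_le_compat_r; lra.
Qed.

Lemma l2_le_cut_inner S L chi g :
  NoDup S -> incl S L -> (forall x, In x S -> chi x = 1) ->
  l2 S g <= cut_inner L chi g g.
Proof.
  intros NS HSL H1. unfold l2, cut_inner.
  rewrite (sumL_map_ext_in _ (fun x => ms G x * chi x ^ 2 * (g x * g x)))
    by (intros x Hx; rewrite H1 by auto; ring).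
  apply sumL_map_incl_le; auto. intros x _. assert (0 < ms G x) by apply ms_pos.
  apply Rmult_le_pos; [apply Rmult_le_pos; [lra | apply pow2_ge_0] | apply Rle_0_sqr].
Qed.

Lemma cut_form_nonneg S phi g :
  (forall x, 0 <= phi x <= 1) -> 0 <= cut_form S phi g g.
Proof.
  intros Hb. apply edge_sum_nonneg. intros x y _ Ha.
  assert (0 <= wt G x y) by now apply wt_nonneg.
  destruct (Hb x), (Hb y). assert (0 <= (g y - g x) * (g y - g x)) by apply Rle_0_sqr.
  apply Rmult_le_pos; [| lra]. repeat apply Rmult_le_pos; lra.
Qed.

Lemma cut_form_le_dirichlet S phi g :
  (forall x, 0 <= phi x <= 1) -> cut_form S phi g g <= dirichlet S g.
Proof.
  intros Hb. apply edge_sum_le. intros x y _ Ha.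
  assert (0 <= wt G x y) by now apply wt_nonneg.
  destruct (Hb x), (Hb y). assert (0 <= (g y - g x) * (g y - g x)) by apply Rle_0_sqr.
  assert (0 <= phi x * phi y <= 1) by nra.
  assert (0 <= wt G x y * ((g y - g x) * (g y - g x))) by nra. nra.
Qed.

Lemma sumL_laplacian_edge_sum (c g : V -> R) L :
  sumL (map (fun x => c x * (laplacian G g x * ms G x)) L) =
  edge_sum G L (fun x y => c x * (wt G x y * (g y - g x))).
Proof.
  apply sumL_map_ext_in. intros x _. now rewrite laplacian_mul_ms, sumL_map_scal.
Qed.

Lemma cutoff_gradient_sum S L chi K (h : V -> R) :
  cutoff G S L chi K -> (forall x, 0 <= h x) ->
  edge_sum G L (fun x y => h x * (wt G x y * (chi y - chi x) ^ 2))
  <= K * sumL (map (fun x => h x * ms G x) L).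
Proof.
  intros Hc Hh. unfold edge_sum. rewrite <- sumL_map_scal. apply sumL_map_le. intros x _.
  rewrite sumL_map_scal. pose proof (cutoff_gradient Hc x). pose proof (Hh x). nra.
Qed.

Lemma cutoff_edge_support S L chi K :
  cutoff G S L chi K -> collared G S L chi ->
  forall x y, adj G x y -> chi x <> 0 \/ chi y <> 0 -> In x L /\ In y L.
Proof.
  intros Hc [_ Hout] x y Ha [Hx | Hy].
  - split; [now apply (cutoff_support Hc) | eauto].
  - split; [apply (Hout y x); auto using adj_sym | now apply (cutoff_support Hc)].
Qed.

(* Discrete Leibniz rule for [chi g] across an edge [x y], with [a, b = chi x, chi y] and
   [p, q = g x, g y]; the defect is [w (p - q)^2 (b - a)^2 / 2]. *)
Lemma edge_leibniz_le w a b p q : 0 <= w ->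
  a ^ 2 * p * (w * (q - p)) + b ^ 2 * q * (w * (p - q)) + w * (b * q - a * p) ^ 2
  <= / 2 * (p ^ 2 * (w * (b - a) ^ 2)) + / 2 * (q ^ 2 * (w * (a - b) ^ 2)).
Proof.
  intros Hw.
  assert (0 <= w * ((p - q) * (b - a)) ^ 2) by (apply Rmult_le_pos; [lra | apply pow2_ge_0]).
  enough (/ 2 * (p ^ 2 * (w * (b - a) ^ 2)) + / 2 * (q ^ 2 * (w * (a - b) ^ 2))
          - (a ^ 2 * p * (w * (q - p)) + b ^ 2 * q * (w * (p - q)) + w * (b * q - a * p) ^ 2)
          = / 2 * (w * ((p - q) * (b - a)) ^ 2)) by lra.
  field.
Qed.

Lemma young_le w a b K : 0 <= w -> 0 < K ->
  - (w * a * b) <= / 2 * (/ K * (w * a ^ 2)) + / 2 * K * (w * b ^ 2).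
Proof.
  intros Hw HK. assert (0 <= w * (a + K * b) ^ 2 / K)
    by (apply Rmult_le_pos; [apply Rmult_le_pos; [lra | apply pow2_ge_0] |
                             apply Rlt_le, Rinv_0_lt_compat; lra]).
  enough (/ 2 * (/ K * (w * a ^ 2)) + / 2 * K * (w * b ^ 2) + w * a * b
          = / 2 * (w * (a + K * b) ^ 2 / K)) by lra.
  field. lra.
Qed.

(* Discrete Caccioppoli inequality: along the heat flow, the left-hand side is
   [d/dt |chi v|^2_L], so [d/dt |chi v|^2_L + |grad v|^2_S <= K |v|^2_L]. *)
Lemma caccioppoli_energy S L chi K g :
  cutoff G S L chi K -> collared G S L chi ->
  2 * cut_inner L chi g (laplacian G g) <= - dirichlet S g + K * l2 L g.
Proof.
  intros Hc Hcol. assert (Hedge := cutoff_edge_support S L chi K Hc Hcol).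
  set (F := fun x y => chi x ^ 2 * g x * (wt G x y * (g y - g x))).
  set (A := fun x y => wt G x y * (chi y * g y - chi x * g x) ^ 2).
  set (B := fun x y => g x ^ 2 * (wt G x y * (chi y - chi x) ^ 2)).
  assert (HF : cut_inner L chi g (laplacian G g) = edge_sum G L F).
  { unfold cut_inner.
    rewrite (sumL_map_ext_in _ (fun x => chi x ^ 2 * g x * (laplacian G g x * ms G x)))
      by (intros; ring).
    apply sumL_laplacian_edge_sum. }
  assert (HFsym : edge_sum G L F = edge_sum G L (fun x y => F y x)).
  { apply edge_sum_swap; [apply (cutoff_nodup_out Hc) |].
    intros x y Ha Hn. apply Hedge; auto. left. intros Hx. apply Hn. unfold F. rewrite Hx. ring. }
  assert (HBsym : edge_sum G L B = edge_sum G L (fun x y => B y x)).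
  { apply edge_sum_swap; [apply (cutoff_nodup_out Hc) |].
    intros x y Ha Hn. apply Hedge; auto.
    destruct (Req_dec (chi x) 0) as [Hx | Hx]; [| now left].
    destruct (Req_dec (chi y) 0) as [Hy | Hy]; [| now right].
    exfalso. apply Hn. unfold B. rewrite Hx, Hy. ring. }
  assert (Hpt : edge_sum G L (fun x y => F x y + F y x + A x y)
                <= edge_sum G L (fun x y => / 2 * B x y + / 2 * B y x)).
  { apply edge_sum_le. intros x y _ Ha. unfold F, A, B. rewrite (wt_sym _ G y x).
    apply edge_leibniz_le. now apply wt_nonneg. }
  rewrite !edge_sum_add, !edge_sum_scal, <- HFsym, <- HBsym in Hpt.
  assert (HB : edge_sum G L B <= K * l2 L g).
  { unfold l2. rewrite (sumL_map_ext_in _ (fun x => g x ^ 2 * ms G x)) by (intros; ring).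
    apply (cutoff_gradient_sum S); auto. intros; apply pow2_ge_0. }
  assert (HA : dirichlet S g <= edge_sum G L A).
  { apply Rle_trans with (edge_sum G S A).
    - right. apply edge_sum_ext. intros x y Hx Ha. destruct Hcol as [Hin _].
      unfold A. rewrite (cutoff_eq1 Hc x Hx), (Hin x y Hx Ha). ring.
    - apply edge_sum_incl_le; [apply (cutoff_nodup_in Hc) | apply (cutoff_incl Hc) |].
      intros x y _ Ha. apply Rmult_le_pos; [now apply wt_nonneg | apply pow2_ge_0]. }
  lra.
Qed.

Lemma cut_form_laplacian_eq S phi g : NoDup S -> (forall x, phi x <> 0 -> In x S) ->
  cut_form S phi g (laplacian G g) =
  - 2 * sumL (map (fun x => phi x ^ 2 * laplacian G g x ^ 2 * ms G x) S)
  - 2 * edge_sum G S (fun x y =>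
          wt G x y * (phi x * laplacian G g x * (phi y - phi x)) * (g y - g x)).
Proof.
  intros NS Hsupp. set (f := laplacian G g).
  set (P := fun x y => wt G x y * phi x * phi y * (g y - g x) * f x).
  assert (Hsym : edge_sum G S P = edge_sum G S (fun x y => P y x)).
  { apply edge_sum_swap; auto. intros x y _ Hn.
    split; apply Hsupp; intros Hz; apply Hn; unfold P; rewrite Hz; ring. }
  assert (HP : cut_form S phi g f = -2 * edge_sum G S P).
  { unfold cut_form.
    rewrite (edge_sum_ext G S _ (fun x y => -1 * P y x + -1 * P x y))
      by (intros; unfold P; rewrite (wt_sym _ G y x); ring).
    rewrite edge_sum_add, !edge_sum_scal, <- Hsym. ring. }
  rewrite HP, (edge_sum_ext G S P (fun x y => phi x ^ 2 * f x * (wt G x y * (g y - g x))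
      + wt G x y * (phi x * f x * (phi y - phi x)) * (g y - g x))) by (intros; unfold P; ring).
  rewrite edge_sum_add, <- sumL_laplacian_edge_sum.
  rewrite (sumL_map_ext_in _ (fun x => phi x ^ 2 * f x ^ 2 * ms G x)) by (intros; unfold f; ring).
  ring.
Qed.

(* The same argument applied to [v_t = laplacian v]: the left-hand side is [d/dt] of the
   cut-off Dirichlet energy, so this bounds [|v_t|^2] by [|grad v|^2]. *)
Lemma caccioppoli_laplacian S2 S phi K g : 0 < K ->
  cutoff G S2 S phi K ->
  2 * cut_form S phi g (laplacian G g) <= - 2 * l2 S2 (laplacian G g) + 2 * K * dirichlet S g.
Proof.
  intros HK Hc.
  rewrite (cut_form_laplacian_eq S phi g (cutoff_nodup_out Hc) (cutoff_support Hc)).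
  set (f := laplacian G g).
  set (Fp := sumL (map (fun x => phi x ^ 2 * f x ^ 2 * ms G x) S)).
  set (C := fun x y => wt G x y * (phi x * f x * (phi y - phi x)) * (g y - g x)).
  assert (HCF : / K * edge_sum G S (fun x y => (phi x * f x) ^ 2 *
                                      (wt G x y * (phi y - phi x) ^ 2)) <= Fp).
  { pose proof (cutoff_gradient_sum S2 S phi K (fun x => (phi x * f x) ^ 2) Hc
                  (fun x => pow2_ge_0 _)).
    apply Rmult_le_reg_l with K; auto. rewrite <- Rmult_assoc, Rinv_r, Rmult_1_l by lra.
    unfold Fp. rewrite (sumL_map_ext_in _ (fun x => (phi x * f x) ^ 2 * ms G x))
      by (intros; ring).
    exact H. }
  assert (HC : - edge_sum G S C <= / 2 * (/ K * edge_sum G S (fun x y =>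
      (phi x * f x) ^ 2 * (wt G x y * (phi y - phi x) ^ 2))) + / 2 * K * dirichlet S g).
  { unfold dirichlet. rewrite <- !edge_sum_scal, <- edge_sum_add.
    rewrite <- (Rmult_1_l (edge_sum G S C)), Ropp_mult_distr_l, <- edge_sum_scal.
    apply edge_sum_le. intros x y _ Ha.
    pose proof (young_le (wt G x y) (phi x * f x * (phi y - phi x)) (g y - g x) K
                  (wt_nonneg G x y Ha) HK).
    unfold C. lra. }
  assert (HS2 : l2 S2 f <= Fp).
  { unfold l2, Fp.
    rewrite (sumL_map_ext_in (fun x => ms G x * f x ^ 2) (fun x => phi x ^ 2 * f x ^ 2 * ms G x))
      by (intros x Hx; rewrite (cutoff_eq1 Hc x Hx); ring).
    apply sumL_map_incl_le; [apply (cutoff_nodup_in Hc) | apply (cutoff_incl Hc) |].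
    intros x _. apply Rmult_le_pos; [apply Rmult_le_pos |]; try apply pow2_ge_0.
    apply Rlt_le, ms_pos. }
  lra.
Qed.

Lemma l2_ge_point L g x : NoDup L -> In x L -> ms G x * g x ^ 2 <= l2 L g.
Proof.
  intros NL Hx. replace (ms G x * g x ^ 2) with (l2 (x :: nil) g) by (unfold l2; simpl; ring).
  apply sumL_map_incl_le.
  - constructor; [intros [] | constructor].
  - intros y [<- | []]; auto.
  - intros y _. apply Rmult_le_pos; [apply Rlt_le, ms_pos | apply pow2_ge_0].
Qed.

End Energies.

Lemma is_derive_eq_val (f : R -> R) (t l l' : R) : is_derive f t l -> l = l' -> is_derive f t l'.
Proof. now intros H <-. Qed.

(* Coquelicot states these for an abstract normed module, with [plus]/[mult]/[minus]; the
   versions over [R] unify with goals written with [Rplus]/[Rmult]/[Rminus]. *)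
Lemma is_derive_Rmult (f g : R -> R) t df dg : is_derive f t df -> is_derive g t dg ->
  is_derive (fun s => f s * g s) t (df * g t + f t * dg).
Proof. intros. apply (is_derive_mult f g); auto using Rmult_comm. Qed.

Lemma is_derive_Rminus (f g : R -> R) t df dg : is_derive f t df -> is_derive g t dg ->
  is_derive (fun s => f s - g s) t (df - dg).
Proof. apply (is_derive_minus f g). Qed.

Lemma continuous_Rminus (f g : R -> R) t : continuous f t -> continuous g t ->
  continuous (fun s => f s - g s) t.
Proof. apply (continuous_minus f g). Qed.

Lemma continuous_Rmult (f g : R -> R) t : continuous f t -> continuous g t ->
  continuous (fun s => f s * g s) t.
Proof. apply (continuous_mult f g). Qed.

Lemma continuous_sqr (f : R -> R) t : continuous f t -> continuous (fun s => f s ^ 2) t.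
Proof.
  intros H. apply (continuous_ext (fun s => f s * f s)); [intros; simpl; ring |].
  now apply continuous_Rmult.
Qed.

Lemma continuous_Rmult_l (c : R) (f : R -> R) t : continuous f t -> continuous (fun s => c * f s) t.
Proof. apply (continuous_scal_r c f). Qed.

Lemma is_derive_sumL {A} (F : A -> R -> R) (F' : A -> R) l t :
  (forall a, In a l -> is_derive (F a) t (F' a)) ->
  is_derive (fun s => sumL (map (fun a => F a s) l)) t (sumL (map F' l)).
Proof.
  induction l as [|a l IH]; intros H; simpl.
  - apply (is_derive_const 0).
  - apply (is_derive_plus (F a) (fun s => sumL (map (fun a => F a s) l)));
      [apply H; now left | apply IH; intros; apply H; now right].
Qed.

Lemma continuous_sumL {A} (F : A -> R -> R) l t :
  (forall a, In a l -> continuous (F a) t) ->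
  continuous (fun s => sumL (map (fun a => F a s) l)) t.
Proof.
  induction l as [|a l IH]; intros H; simpl.
  - apply (continuous_const (U := R_UniformSpace) (V := R_UniformSpace) 0).
  - apply (continuous_plus (F a) (fun s => sumL (map (fun a => F a s) l)));
      [apply H; now left | apply IH; intros; apply H; now right].
Qed.

Lemma ex_RInt_cont (g : R -> R) a b :
  a <= b -> (forall t, a <= t <= b -> continuous g t) -> ex_RInt g a b.
Proof.
  intros Hab H. apply (ex_RInt_continuous (V := R_CompleteNormedModule)).
  rewrite Rmin_left, Rmax_right by lra. auto.
Qed.

Lemma RInt_le_dissipation (E E' g h : R -> R) a b : a <= b ->
  (forall t, a <= t <= b -> is_derive E t (E' t)) ->
  (forall t, a <= t <= b -> continuous E' t) ->
  (forall t, a <= t <= b -> continuous g t) ->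
  (forall t, a <= t <= b -> continuous h t) ->
  (forall t, a <= t <= b -> g t + E' t <= h t) ->
  RInt g a b <= E a - E b + RInt h a b.
Proof.
  intros Hab HD HC Hg Hh Hle.
  assert (HE : is_RInt E' a b (E b - E a))
    by (apply (is_RInt_derive E E'); rewrite Rmin_left, Rmax_right by lra; auto).
  assert (Hh' : is_RInt h a b (RInt h a b))
    by (apply (RInt_correct (V := R_CompleteNormedModule)), ex_RInt_cont; auto).
  assert (HhE : is_RInt (fun t => h t - E' t) a b (RInt h a b - (E b - E a)))
    by exact (is_RInt_minus (V := R_CompleteNormedModule) _ _ _ _ _ _ Hh' HE).
  assert (RInt g a b <= RInt (fun t => h t - E' t) a b).
  { apply RInt_le; auto. apply ex_RInt_cont; auto. eexists; exact HhE.
    intros t Ht. assert (H := Hle t ltac:(lra)). lra. }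
  rewrite (is_RInt_unique (V := R_CompleteNormedModule) _ _ _ _ HhE) in H. lra.
Qed.

Lemma exists_le_mean (g : R -> R) a l : 0 < l ->
  (forall t, a <= t <= a + l -> continuous g t) ->
  exists t, a <= t <= a + l /\ g t * l <= RInt g a (a + l).
Proof.
  intros Hl Hc.
  destruct (continuity_ab_min g a (a + l)) as [m [Hm Ham]]; [lra | |].
  { intros c Hc'. apply continuity_pt_filterlim, Hc, Hc'. }
  exists m. split; auto.
  assert (RInt (fun _ => g m) a (a + l) <= RInt g a (a + l)).
  { apply RInt_le.
    - lra.
    - apply (ex_RInt_const (V := R_CompleteNormedModule)).
    - apply ex_RInt_cont; [lra | auto].
    - intros; apply Hm; lra. }
  rewrite (RInt_const (V := R_CompleteNormedModule)) in H.
  change (scal (a + l - a) (g m)) with ((a + l - a) * g m) in H. lra.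
Qed.

Lemma RInt_le_subinterval (g : R -> R) a a' b' b : a <= a' -> a' <= b' -> b' <= b ->
  (forall t, a <= t <= b -> continuous g t) -> (forall t, a <= t <= b -> 0 <= g t) ->
  RInt g a' b' <= RInt g a b.
Proof.
  intros Ha Hab Hb Hc Hn.
  assert (Hex : forall c d, a <= c -> c <= d -> d <= b -> ex_RInt g c d)
    by (intros; apply ex_RInt_cont; [lra | intros; apply Hc; lra]).
  assert (Hpos : forall c d, a <= c -> c <= d -> d <= b -> 0 <= RInt g c d)
    by (intros; apply RInt_ge_0; auto; intros; apply Hn; lra).
  rewrite <- (RInt_Chasles g a a' b), <- (RInt_Chasles g a' b' b) by (apply Hex; lra).
  assert (0 <= RInt g a a') by (apply Hpos; lra).
  assert (0 <= RInt g b' b) by (apply Hpos; lra).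
  repeat change (plus ?x ?y) with (x + y). lra.
Qed.

Lemma exists_le_of_RInt_le (g : R -> R) a b l K B : 0 < l -> K * l = 1 -> a + l <= b ->
  (forall t, a <= t <= b -> continuous g t) -> (forall t, a <= t <= b -> 0 <= g t) ->
  RInt g a b <= B -> exists t, a <= t <= a + l /\ g t <= K * B.
Proof.
  intros Hl HKl Hb Hc Hn HB.
  destruct (exists_le_mean g a l Hl) as [t [Ht Hgt]]; [intros; apply Hc; lra |].
  exists t. split; auto.
  assert (RInt g a (a + l) <= RInt g a b) by (apply RInt_le_subinterval; auto; lra).
  assert (HK : 0 < K) by nra.
  replace (g t) with (g t * l * K) by (rewrite Rmult_assoc, (Rmult_comm l), HKl; ring).
  rewrite (Rmult_comm K). apply Rmult_le_compat_r; lra.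
Qed.

Section HeatFlow.
Context {V : Type} (G : wgraph V).

Lemma is_derive_edge_sum L (h : V -> V -> R -> R) h' t :
  (forall x y, is_derive (h x y) t (h' x y)) ->
  is_derive (fun s => edge_sum G L (fun x y => h x y s)) t (edge_sum G L h').
Proof.
  intros H. apply (is_derive_sumL (fun x s => sumL (map (fun y => h x y s) (nbr G x)))).
  intros x _. apply (is_derive_sumL (fun y s => h x y s)). auto.
Qed.

Lemma continuous_edge_sum L (h : V -> V -> R -> R) t :
  (forall x y, continuous (h x y) t) ->
  continuous (fun s => edge_sum G L (fun x y => h x y s)) t.
Proof.
  intros H. apply (continuous_sumL (fun x s => sumL (map (fun y => h x y s) (nbr G x)))).
  intros x _. apply (continuous_sumL (fun y s => h x y s)). auto.
Qed.

Definition laplacian_t (v : V -> R -> R) (x : V) (t : R) : R := laplacian G (fun y => v y t) x.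

Definition heat_sol (v : V -> R -> R) : Prop :=
  forall x t, t < 0 -> is_derive (v x) t (laplacian_t v x t).

Fixpoint iter_laplacian (u : V -> R -> R) (j : nat) : V -> R -> R :=
  match j with
  | O => u
  | S j => laplacian_t (iter_laplacian u j)
  end.

Lemma heat_sol_laplacian_t v : heat_sol v -> heat_sol (laplacian_t v).
Proof.
  intros Hv x t Ht.
  apply (is_derive_sumL (fun y s => wt G x y / ms G x * (v y s - v x s))).
  intros y _. apply is_derive_scal, (is_derive_minus (v y) (v x)); auto.
Qed.

Lemma heat_sol_iter_laplacian u : heat_sol u -> forall j, heat_sol (iter_laplacian u j).
Proof. intros Hu j. induction j; simpl; auto using heat_sol_laplacian_t. Qed.

Lemma heat_sol_continuous v : heat_sol v -> forall x t, t < 0 -> continuous (v x) t.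
Proof. intros Hv x t Ht. apply (ex_derive_continuous (v x)). eexists. now apply Hv. Qed.

Definition l2_t (L : list V) (v : V -> R -> R) (t : R) : R := l2 G L (fun x => v x t).

Definition dirichlet_t (S : list V) (v : V -> R -> R) (t : R) : R :=
  dirichlet G S (fun x => v x t).

Section Solution.
Variable v : V -> R -> R.
Hypothesis Hv : heat_sol v.

Lemma l2_t_continuous L t : t < 0 -> continuous (l2_t L v) t.
Proof.
  intros Ht. apply (continuous_sumL (fun x s => ms G x * v x s ^ 2)). intros x _.
  apply continuous_Rmult_l, continuous_sqr. now apply heat_sol_continuous.
Qed.

Lemma dirichlet_t_continuous S t : t < 0 -> continuous (dirichlet_t S v) t.
Proof.
  intros Ht. apply (continuous_edge_sum S (fun x y s => wt G x y * (v y s - v x s) ^ 2)).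
  intros x y. apply continuous_Rmult_l, continuous_sqr.
  apply continuous_Rminus; now apply heat_sol_continuous.
Qed.

Lemma cut_inner_derive L chi t : t < 0 ->
  is_derive (fun s => cut_inner G L chi (fun x => v x s) (fun x => v x s)) t
            (2 * cut_inner G L chi (fun x => v x t) (laplacian G (fun x => v x t))).
Proof.
  intros Ht. unfold cut_inner. rewrite <- sumL_map_scal.
  apply (is_derive_sumL (fun x s => ms G x * chi x ^ 2 * (v x s * v x s))). intros x _.
  eapply is_derive_eq_val; [apply is_derive_scal, is_derive_Rmult; now apply Hv |].
  unfold laplacian_t. ring.
Qed.

Lemma cut_inner_laplacian_continuous L chi t : t < 0 ->
  continuous (fun s => 2 * cut_inner G L chi (fun x => v x s) (laplacian G (fun x => v x s))) t.
Proof.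
  intros Ht. apply continuous_Rmult_l.
  apply (continuous_sumL (fun x s => ms G x * chi x ^ 2 * (v x s * laplacian_t v x s))).
  intros x _. apply continuous_Rmult_l, continuous_Rmult.
  - now apply heat_sol_continuous.
  - apply (heat_sol_continuous (laplacian_t v)); auto using heat_sol_laplacian_t.
Qed.

Lemma cut_form_derive S phi t : t < 0 ->
  is_derive (fun s => cut_form G S phi (fun x => v x s) (fun x => v x s)) t
            (2 * cut_form G S phi (fun x => v x t) (laplacian G (fun x => v x t))).
Proof.
  intros Ht. unfold cut_form. rewrite <- edge_sum_scal.
  apply (is_derive_edge_sum S
    (fun x y s => wt G x y * phi x * phi y * ((v y s - v x s) * (v y s - v x s)))).
  intros x y.
  eapply is_derive_eq_val;
    [apply is_derive_scal, is_derive_Rmult; apply is_derive_Rminus; now apply Hv |].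
  unfold laplacian_t. ring.
Qed.

Lemma cut_form_laplacian_continuous S phi t : t < 0 ->
  continuous (fun s => 2 * cut_form G S phi (fun x => v x s) (laplacian G (fun x => v x s))) t.
Proof.
  intros Ht. apply continuous_Rmult_l.
  apply (continuous_edge_sum S (fun x y s => wt G x y * phi x * phi y *
           ((v y s - v x s) * (laplacian_t v y s - laplacian_t v x s)))).
  intros x y. apply continuous_Rmult_l, continuous_Rmult; apply continuous_Rminus.
  1, 2: now apply heat_sol_continuous.
  all: apply (heat_sol_continuous (laplacian_t v)); auto using heat_sol_laplacian_t.
Qed.

End Solution.
End HeatFlow.

Section Estimates.
Context {V : Type} (G : wgraph V).
Variable v : V -> R -> R.
Hypothesis Hv : heat_sol G v.

Lemma energy_estimate S L chi K a b :
  cutoff G S L chi K -> collared G S L chi -> a <= b -> b < 0 ->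
  RInt (dirichlet_t G S v) a b <=
  cut_inner G L chi (fun x => v x a) (fun x => v x a)
  - cut_inner G L chi (fun x => v x b) (fun x => v x b)
  + RInt (fun t => K * l2_t G L v t) a b.
Proof.
  intros Hc Hcol Hab Hb.
  apply (RInt_le_dissipation (fun s => cut_inner G L chi (fun x => v x s) (fun x => v x s))
    (fun s => 2 * cut_inner G L chi (fun x => v x s) (laplacian G (fun x => v x s)))); auto.
  - intros. apply cut_inner_derive; auto; lra.
  - intros. apply cut_inner_laplacian_continuous; auto; lra.
  - intros. apply (dirichlet_t_continuous G v Hv); lra.
  - intros. apply continuous_Rmult_l, (l2_t_continuous G v Hv); lra.
  - intros t _. pose proof (caccioppoli_energy G S L chi K (fun x => v x t) Hc Hcol).
    unfold dirichlet_t, l2_t. lra.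
Qed.

Lemma laplacian_estimate S2 S phi K a b :
  0 < K -> cutoff G S2 S phi K -> a <= b -> b < 0 ->
  RInt (fun t => 2 * l2_t G S2 (laplacian_t G v) t) a b <=
  cut_form G S phi (fun x => v x a) (fun x => v x a)
  - cut_form G S phi (fun x => v x b) (fun x => v x b)
  + RInt (fun t => 2 * K * dirichlet_t G S v t) a b.
Proof.
  intros HK Hc Hab Hb.
  apply (RInt_le_dissipation (fun s => cut_form G S phi (fun x => v x s) (fun x => v x s))
    (fun s => 2 * cut_form G S phi (fun x => v x s) (laplacian G (fun x => v x s)))); auto.
  - intros. apply cut_form_derive; auto; lra.
  - intros. apply cut_form_laplacian_continuous; auto; lra.
  - intros. apply continuous_Rmult_l.
    apply (l2_t_continuous G (laplacian_t G v)); [now apply heat_sol_laplacian_t | lra].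
  - intros. apply continuous_Rmult_l, (dirichlet_t_continuous G v Hv); lra.
  - intros t _. pose proof (caccioppoli_laplacian G S2 S phi K (fun x => v x t) HK Hc).
    change (l2_t G S2 (laplacian_t G v) t) with (l2 G S2 (laplacian G (fun x => v x t))).
    unfold dirichlet_t. lra.
Qed.

Lemma dirichlet_l2_bound S L chi K a b B :
  cutoff G S L chi K -> collared G S L chi -> 0 <= K -> a <= b -> b < 0 ->
  l2_t G L v a <= K * B -> RInt (l2_t G L v) a b <= B ->
  RInt (dirichlet_t G S v) a b + l2_t G S v b <= 2 * K * B.
Proof.
  intros Hc Hcol HK Hab Hb Ha HB.
  pose proof (energy_estimate S L chi K a b Hc Hcol Hab Hb) as Hen.
  rewrite (RInt_scal (V := R_CompleteNormedModule) (l2_t G L v))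
    in Hen by (apply ex_RInt_cont; auto; intros; apply (l2_t_continuous G v Hv); lra).
  pose proof (cut_inner_le_l2 G L chi (fun x => v x a) (cutoff_bounds Hc)).
  pose proof (l2_le_cut_inner G S L chi (fun x => v x b)
                (cutoff_nodup_in Hc) (cutoff_incl Hc) (cutoff_eq1 Hc)).
  assert (K * RInt (l2_t G L v) a b <= K * B) by (apply Rmult_le_compat_l; auto).
  unfold l2_t in *. change (scal K ?x) with (K * x) in Hen. lra.
Qed.

(* The energy estimate started from a time of small mass, which exists by averaging. *)
Lemma exists_dirichlet_l2_bound S L chi K l a0 b B :
  cutoff G S L chi K -> collared G S L chi -> K * l = 1 -> 0 < l -> a0 + l <= b -> b < 0 ->
  RInt (l2_t G L v) a0 b <= B ->
  exists a, a0 <= a <= a0 + l /\ RInt (dirichlet_t G S v) a b + l2_t G S v b <= 2 * K * B.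
Proof.
  intros Hc Hcol HKl Hl Hb Hb0 HB.
  destruct (exists_le_of_RInt_le (l2_t G L v) a0 b l K B) as [a [Ha HMa]]; auto.
  { intros; apply (l2_t_continuous G v Hv); lra. }
  { intros; apply l2_nonneg. }
  exists a. split; auto. apply (dirichlet_l2_bound S L chi K); auto; try lra.
  - nra.
  - eapply Rle_trans; [| exact HB]. apply RInt_le_subinterval; try lra.
    + intros; apply (l2_t_continuous G v Hv); lra.
    + intros; apply l2_nonneg.
Qed.

Lemma laplacian_l2_bound S2 S L chi phi K l a0 b B :
  cutoff G S L chi K -> collared G S L chi -> cutoff G S2 S phi K ->
  K * l = 1 -> 0 < l -> a0 + 2 * l <= b -> b < 0 ->
  RInt (l2_t G L v) a0 b <= B ->
  RInt (l2_t G S2 (laplacian_t G v)) (a0 + 2 * l) b <= 3 * K ^ 2 * B.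
Proof.
  intros Hc Hcol Hc2 HKl Hl Hb Hb0 HB. assert (HK : 0 < K) by nra.
  destruct (exists_dirichlet_l2_bound S L chi K l a0 b B) as [a1 [Ha1 HD1]]; auto; try lra.
  assert (HD1' : RInt (dirichlet_t G S v) a1 b <= 2 * K * B)
    by (pose proof (l2_nonneg G S (fun x => v x b)); unfold l2_t in HD1; lra).
  destruct (exists_le_of_RInt_le (dirichlet_t G S v) a1 b l K (2 * K * B))
    as [a2 [Ha2 HDa2]]; auto; try lra.
  { intros; apply (dirichlet_t_continuous G v Hv); lra. }
  { intros; apply dirichlet_nonneg. }
  pose proof (laplacian_estimate S2 S phi K a2 b HK Hc2 ltac:(lra) Hb0) as Hlap.
  rewrite !(RInt_scal (V := R_CompleteNormedModule)) in Hlap.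
  2: apply ex_RInt_cont; [lra | intros; apply (dirichlet_t_continuous G v Hv); lra].
  2: apply ex_RInt_cont; [lra | intros; apply (l2_t_continuous G (laplacian_t G v));
                              [now apply heat_sol_laplacian_t | lra]].
  change (scal ?c ?x) with (c * x) in Hlap.
  pose proof (cut_form_le_dirichlet G S phi (fun x => v x a2) (cutoff_bounds Hc2)).
  pose proof (cut_form_nonneg G S phi (fun x => v x b) (cutoff_bounds Hc2)).
  assert (RInt (dirichlet_t G S v) a2 b <= RInt (dirichlet_t G S v) a1 b).
  { apply RInt_le_subinterval; try lra.
    - intros; apply (dirichlet_t_continuous G v Hv); lra.
    - intros; apply dirichlet_nonneg. }
  assert (RInt (l2_t G S2 (laplacian_t G v)) (a0 + 2 * l) b
          <= RInt (l2_t G S2 (laplacian_t G v)) a2 b).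
  { apply RInt_le_subinterval; try lra.
    - intros; apply (l2_t_continuous G (laplacian_t G v)); [now apply heat_sol_laplacian_t | lra].
    - intros; apply l2_nonneg. }
  assert (2 * K * RInt (dirichlet_t G S v) a2 b <= 2 * K * (2 * K * B))
    by (apply Rmult_le_compat_l; lra).
  unfold dirichlet_t in *. nra.
Qed.

End Estimates.

Section Iteration.
Context {V : Type} (G : wgraph V) (rho : V -> V -> R).
Variables (o : V) (s r : R) (u : V -> R -> R).
Hypotheses (Hi : intrinsic G rho) (Hf : finite_balls rho)
  (Hj : forall x y, adj G x y -> rho x y <= s) (Hs : 0 <= s) (Hr : 0 < r)
  (Hu : heat_sol G u).

(* Each Laplacian costs a shell of width [2r + 2s] and a time interval of length [2r^2]. *)
Lemma iter_laplacian_l2_bound T t0 P0 B0 :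
  t0 < 0 ->
  (forall L, ball_enum rho o P0 L -> RInt (l2_t G L u) (- T) t0 <= B0) ->
  forall j L, - T + 2 * INR j * r ^ 2 <= t0 ->
  ball_enum rho o (P0 - INR j * (2 * r + 2 * s)) L ->
  RInt (l2_t G L (iter_laplacian G u j)) (- T + 2 * INR j * r ^ 2) t0
  <= (3 * (/ r ^ 2) ^ 2) ^ j * B0.
Proof.
  intros Ht0 HB0 j. induction j as [|j IH]; intros L Hj0 HL.
  - change (INR 0) with 0 in *. rewrite pow_O, Rmult_1_l.
    replace (- T + 2 * 0 * r ^ 2) with (- T) by ring.
    apply HB0. now replace P0 with (P0 - 0 * (2 * r + 2 * s)) by ring.
  - rewrite S_INR in *. set (P := P0 - INR j * (2 * r + 2 * s)) in *.
    destruct (Hf o P) as [Lj HLj]. destruct (Hf o (P - r - 2 * s)) as [Sj HSj].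
    assert (HL' : ball_enum rho o (P - 2 * r - 2 * s) L)
      by (replace (P - 2 * r - 2 * s) with (P0 - (INR j + 1) * (2 * r + 2 * s))
            by (unfold P; ring); exact HL).
    assert (Hr2 : 0 < r ^ 2) by nra.
    replace (- T + 2 * (INR j + 1) * r ^ 2) with (- T + 2 * INR j * r ^ 2 + 2 * r ^ 2) by ring.
    replace ((3 * (/ r ^ 2) ^ 2) ^ S j * B0)
      with (3 * (/ r ^ 2) ^ 2 * ((3 * (/ r ^ 2) ^ 2) ^ j * B0)) by (simpl; ring).
    apply (laplacian_l2_bound G (iter_laplacian G u j) (heat_sol_iter_laplacian G u Hu j)
             L Sj Lj (ramp rho o (P - r - s) r) (ramp rho o (P - 2 * r - 2 * s) r)
             (/ r ^ 2) (r ^ 2)); try lra.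
    + apply (ramp_cutoff G rho o (P - r - 2 * s) P); auto; lra.
    + apply (ramp_collared G rho s o (P - r - 2 * s) P); auto; [apply Hi | lra | lra].
    + apply (ramp_cutoff G rho o (P - 2 * r - 2 * s) (P - r - 2 * s)); auto; lra.
    + field. lra.
    + apply IH; auto. lra.
Qed.

Lemma iter_laplacian_pointwise_bound q R t0 xs B0 :
  t0 < 0 -> - R ^ 2 + (2 * INR q + 1) * r ^ 2 <= t0 ->
  (forall L, ball_enum rho o R L -> RInt (l2_t G L u) (- R ^ 2) t0 <= B0) ->
  rho xs o <= R - (2 * INR q + 1) * r - (2 * INR q + 2) * s ->
  ms G xs * iter_laplacian G u q xs t0 ^ 2 <= 2 * / r ^ 2 * ((3 * (/ r ^ 2) ^ 2) ^ q * B0).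
Proof.
  intros Ht0 HT HB0 Hxs. set (Pq := R - INR q * (2 * r + 2 * s)).
  destruct (Hf o Pq) as [Lq HLq]. destruct (Hf o (Pq - r - 2 * s)) as [Sq HSq].
  assert (Hr2 : 0 < r ^ 2) by nra.
  assert (Hq := heat_sol_iter_laplacian G u Hu q).
  assert (Hchain := iter_laplacian_l2_bound (R ^ 2) t0 R B0 Ht0 HB0 q Lq ltac:(lra) HLq).
  set (chi := ramp rho o (Pq - r - s) r).
  assert (Hc : cutoff G Sq Lq chi (/ r ^ 2))
    by (apply (ramp_cutoff G rho o (Pq - r - 2 * s) Pq); auto; lra).
  assert (Hcol : collared G Sq Lq chi)
    by (apply (ramp_collared G rho s o (Pq - r - 2 * s) Pq); auto; [apply Hi | lra | lra]).
  assert (HKl : / r ^ 2 * r ^ 2 = 1) by (field; lra).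
  destruct (exists_dirichlet_l2_bound G _ Hq Sq Lq chi _ _ (- R ^ 2 + 2 * INR q * r ^ 2) t0 _
              Hc Hcol HKl Hr2
              ltac:(lra) Ht0 Hchain) as [a [Ha Hbd]].
  assert (0 <= RInt (dirichlet_t G Sq (iter_laplacian G u q)) a t0).
  { apply RInt_ge_0; [lra | |].
    - apply ex_RInt_cont; [lra | intros; apply (dirichlet_t_continuous G _ Hq); lra].
    - intros; apply dirichlet_nonneg. }
  assert (Hin : In xs Sq) by (apply HSq; unfold Pq; lra).
  pose proof (l2_ge_point G Sq (fun x => iter_laplacian G u q x t0) xs
                (proj1 HSq) Hin).
  unfold l2_t in Hbd. lra.
Qed.

End Iteration.

Lemma Rpower_pos x y : 0 < Rpower x y.
Proof. apply exp_pos. Qed.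

Lemma l2_growth_bound {V} (G : wgraph V) rho (u : V -> R -> R) o x1 Cu k Cg alpha R t0 :
  pseudometric rho -> heat_sol G u ->
  (forall Rr l, 0 < Rr -> ball_enum rho o Rr l -> mass G l <= Cg * Rpower (1 + Rr) alpha) ->
  (forall Rr, 0 < Rr -> forall y t, rho y x1 <= Rr -> - Rr ^ 2 <= t <= 0 ->
     Rabs (u y t) <= Cu * Rpower (1 + Rr) k) ->
  0 < R -> - R ^ 2 <= t0 < 0 ->
  forall L, ball_enum rho o R L ->
  RInt (l2_t G L u) (- R ^ 2) t0 <=
  R ^ 2 * ((Cu * Rpower (1 + (R + rho o x1)) k) ^ 2 * (Rabs Cg * Rpower (1 + R) alpha)).
Proof.
  intros (Hn & _ & _ & Htr) Hu Hg HP HR Ht0 L HL.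
  set (M := Cu * Rpower (1 + (R + rho o x1)) k).
  set (c := M ^ 2 * (Rabs Cg * Rpower (1 + R) alpha)).
  assert (Hpt : forall t, - R ^ 2 <= t <= t0 -> l2_t G L u t <= c).
  { intros t Ht. unfold l2_t, l2, c.
    apply Rle_trans with (sumL (map (fun x => M ^ 2 * ms G x) L)).
    - apply sumL_map_le. intros x Hx. apply HL in Hx.
      assert (Hb : Rabs (u x t) <= M).
      { pose proof (Htr x o x1). pose proof (Hn o x1). apply HP; nra. }
      assert (u x t ^ 2 <= M ^ 2)
        by (rewrite <- pow2_abs; apply pow_incr; split; [apply Rabs_pos | auto]).
      assert (0 < ms G x) by apply ms_pos. nra.
    - rewrite sumL_map_scal. apply Rmult_le_compat_l; [apply pow2_ge_0 |].
      eapply Rle_trans; [apply (Hg R L HR HL) |].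
      apply Rmult_le_compat_r; [apply Rlt_le, Rpower_pos | apply Rle_abs]. }
  assert (0 <= c) by (apply Rmult_le_pos; [apply pow2_ge_0 |];
                      apply Rmult_le_pos; [apply Rabs_pos | apply Rlt_le, Rpower_pos]).
  apply Rle_trans with (RInt (fun _ => c) (- R ^ 2) t0).
  - apply RInt_le; [lra | | apply (ex_RInt_const (V := R_CompleteNormedModule)) |].
    + apply ex_RInt_cont; [lra | intros; apply l2_t_continuous; auto; lra].
    + intros; apply Hpt; lra.
  - rewrite (RInt_const (V := R_CompleteNormedModule)).
    change (scal ?a ?b) with (a * b). fold M c. nra.
Qed.

Lemma inv_sq_div_le R N : 1 <= R -> 0 < N -> 0 < / (R / N) ^ 2 <= 4 * N ^ 2 / (1 + R) ^ 2.
Proof.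
  intros HR HN. replace (/ (R / N) ^ 2) with (N ^ 2 / R ^ 2) by (field; lra).
  split; [apply Rdiv_lt_0_compat; apply pow_lt; lra |].
  apply Rmult_le_reg_r with (R ^ 2 * (1 + R) ^ 2); [nra |].
  replace (N ^ 2 / R ^ 2 * (R ^ 2 * (1 + R) ^ 2)) with (N ^ 2 * (1 + R) ^ 2) by (field; lra).
  replace (4 * N ^ 2 / (1 + R) ^ 2 * (R ^ 2 * (1 + R) ^ 2)) with (N ^ 2 * (4 * R ^ 2))
    by (field; nra).
  apply Rmult_le_compat_l; [apply pow2_ge_0 | nra].
Qed.

Lemma iter_factor_le (q : nat) K kap X : 0 < X -> 0 < K <= kap / X ^ 2 ->
  2 * K * (3 * K ^ 2) ^ q <= 2 * kap * (3 * kap ^ 2) ^ q / X ^ (4 * q + 2).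
Proof.
  intros HX HK.
  replace (2 * kap * (3 * kap ^ 2) ^ q / X ^ (4 * q + 2))
    with (2 * (kap / X ^ 2) * (3 * (kap / X ^ 2) ^ 2) ^ q)
    by (replace (3 * (kap / X ^ 2) ^ 2) with (3 * kap ^ 2 * / X ^ 4) by (field; lra);
        rewrite Rpow_mult_distr, pow_inv, pow_add, pow_mult; field;
        repeat split; repeat apply pow_nonzero; lra).
  apply Rmult_le_compat; [lra | apply pow_le; nra | lra |].
  apply pow_incr. split; [nra |]. apply Rmult_le_compat_l; [lra |].
  apply pow_incr. lra.
Qed.

Lemma Rpower_shift_sq_le c d R k : 0 <= d -> 0 <= R -> 0 <= k ->
  (c * Rpower (1 + (R + d)) k) ^ 2 <= c ^ 2 * Rpower (1 + d) k ^ 2 * Rpower (1 + R) (2 * k).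
Proof.
  intros Hd HR Hk. rewrite Rpow_mult_distr, Rmult_assoc.
  apply Rmult_le_compat_l; [apply pow2_ge_0 |].
  replace (Rpower (1 + R) (2 * k)) with (Rpower (1 + R) k ^ 2)
    by (rewrite <- Rpower_pow, Rpower_mult by apply Rpower_pos; f_equal; simpl; ring).
  rewrite <- Rpow_mult_distr. apply pow_incr. split; [apply Rlt_le, Rpower_pos |].
  rewrite Rpower_mult_distr by lra. apply Rle_Rpower_l; nra.
Qed.

Lemma pow_Rpower_ratio_le X a b n : 1 <= X -> 2 + a + b - INR n <= -1 ->
  X ^ 2 * Rpower X a * Rpower X b / X ^ n <= / X.
Proof.
  intros HX Hn. rewrite <- !Rpower_pow by lra. unfold Rdiv.
  rewrite <- Rpower_Ropp, <- !Rpower_plus.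
  rewrite <- (Rpower_1 X) at 2 by lra. rewrite <- Rpower_Ropp.
  apply Rle_Rpower; [lra |]. simpl (INR 2). lra.
Qed.

Lemma decay_bound (q : nat) k alpha Cu Cg d N :
  0 <= k -> 4 * INR q > 2 * k + alpha + 2 -> 0 <= d -> 0 < N ->
  exists C, 0 <= C /\ forall R, 1 <= R ->
  2 * / (R / N) ^ 2 * ((3 * (/ (R / N) ^ 2) ^ 2) ^ q *
    (R ^ 2 * ((Cu * Rpower (1 + (R + d)) k) ^ 2 * (Rabs Cg * Rpower (1 + R) alpha))))
  <= C / (1 + R).
Proof.
  intros Hk Hq Hd HN.
  set (kap := 4 * N ^ 2). set (W := Cu ^ 2 * Rpower (1 + d) k ^ 2 * Rabs Cg).
  assert (HW : 0 <= W)
    by (apply Rmult_le_pos; [apply Rmult_le_pos; apply pow2_ge_0 | apply Rabs_pos]).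
  assert (Hc : 0 <= 2 * kap * (3 * kap ^ 2) ^ q)
    by (apply Rmult_le_pos; [unfold kap; nra | apply pow_le; pose proof (pow2_ge_0 kap); lra]).
  exists (2 * kap * (3 * kap ^ 2) ^ q * W). split; [nra |]. intros R HR.
  set (X := 1 + R). set (K := / (R / N) ^ 2).
  assert (HX : 1 <= X) by (unfold X; lra).
  assert (HK : 0 < K <= kap / X ^ 2) by now apply inv_sq_div_le.
  assert (HF := iter_factor_le q K kap X ltac:(lra) HK).
  assert (HM := Rpower_shift_sq_le Cu d R k Hd ltac:(lra) Hk). fold X in HM.
  assert (HE : X ^ 2 * Rpower X (2 * k) * Rpower X alpha / X ^ (4 * q + 2) <= / X)
    by (apply pow_Rpower_ratio_le; [lra |];
        rewrite plus_INR, mult_INR; simpl (INR 2); simpl (INR 4); lra).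
  assert (HR2 : R ^ 2 <= X ^ 2) by (unfold X; nra).
  assert (0 <= Rabs Cg * Rpower X alpha)
    by (apply Rmult_le_pos; [apply Rabs_pos | apply Rlt_le, Rpower_pos]).
  assert (0 <= 2 * K * (3 * K ^ 2) ^ q) by (pose proof (pow_le (3 * K ^ 2) q); nra).
  apply Rle_trans with (2 * kap * (3 * kap ^ 2) ^ q / X ^ (4 * q + 2) * (X ^ 2 *
    (Cu ^ 2 * Rpower (1 + d) k ^ 2 * Rpower X (2 * k) * (Rabs Cg * Rpower X alpha)))).
  - rewrite <- Rmult_assoc. apply Rmult_le_compat; auto.
    + apply Rmult_le_pos; [apply pow2_ge_0 | apply Rmult_le_pos; [apply pow2_ge_0 | auto]].
    + apply Rmult_le_compat; [apply pow2_ge_0 | | auto |].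
      { apply Rmult_le_pos; [apply pow2_ge_0 | auto]. }
      apply Rmult_le_compat_r; auto.
  - replace (2 * kap * (3 * kap ^ 2) ^ q / X ^ (4 * q + 2) * (X ^ 2 *
      (Cu ^ 2 * Rpower (1 + d) k ^ 2 * Rpower X (2 * k) * (Rabs Cg * Rpower X alpha))))
      with (2 * kap * (3 * kap ^ 2) ^ q * W *
            (X ^ 2 * Rpower X (2 * k) * Rpower X alpha / X ^ (4 * q + 2)))
      by (unfold W; field; apply pow_nonzero; lra).
    unfold Rdiv at 2. apply Rmult_le_compat_l; [nra | exact HE].
Qed.

Lemma nonpos_of_le_decay c C R0 : 0 <= C ->
  (forall R, R0 <= R -> 1 <= R -> c <= C / (1 + R)) -> c <= 0.
Proof.
  intros HC H. destruct (Rle_dec c 0) as [| Hc]; auto. exfalso.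
  set (R := Rmax R0 1 + C / c).
  assert (HCc : 0 <= C / c) by (apply Rdiv_le_0_compat; lra).
  assert (H1 : 1 <= Rmax R0 1) by apply Rmax_r.
  assert (Hb := H R ltac:(unfold R; pose proof (Rmax_l R0 1); lra) ltac:(unfold R; lra)).
  apply Rle_div_r in Hb; [| unfold R; lra].
  assert (C = C / c * c) by (field; lra).
  assert (C / c * c < R * c) by (apply Rmult_lt_compat_r; unfold R; lra).
  nra.
Qed.

Lemma iter_laplacian_vanishes {V} (G : wgraph V) rho alpha k u q :
  intrinsic G rho -> finite_balls rho -> finite_jump G rho ->
  poly_growth_with G rho alpha -> 0 < k -> in_Pk G rho k u ->
  4 * INR q > 2 * k + alpha + 2 ->
  forall x t, t < 0 -> iter_laplacian G u q x t = 0.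
Proof.
  intros Hi Hf [s0 Hs0] [o [Cg Hg]] Hk [Hu [x1 [Cu HCu]]] Hq xs t0 Ht0.
  assert (Hsol : heat_sol G u) by (intros x t Ht; now apply Hu).
  pose proof Hi as [Hp _]. pose proof Hp as (Hn & _).
  set (s := Rabs s0).
  assert (Hj : forall x y, adj G x y -> rho x y <= s)
    by (intros; eapply Rle_trans; [apply Hs0; auto | apply Rle_abs]).
  assert (Hs : 0 <= s) by apply Rabs_pos.
  (* With [r = R / N], the [q + 1] shells of width [2r + 2s] fit between [x] and the boundary
     of [B_R(o)], and the [2q + 1] time steps of length [r^2] fit in [[-R^2, t]], for all
     large [R]. *)
  set (N := 2 * INR q + 2).
  assert (HN : 2 <= N) by (unfold N; pose proof (pos_INR q); lra).
  destruct (decay_bound q k alpha Cu Cg (rho o x1) N) as [C [HC0 HC]]; auto; try lra.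
  set (v := iter_laplacian G u q xs t0).
  assert (Hv : ms G xs * v ^ 2 <= 0).
  { apply (nonpos_of_le_decay _ C (- 2 * t0 + N * (rho xs o + N * s)) HC0).
    intros R HR0 HR1. eapply Rle_trans; [| apply (HC R HR1)].
    assert (Hr : 0 < R / N) by (apply Rdiv_lt_0_compat; lra).
    assert (HR2 : R ^ 2 >= - 2 * t0) by (pose proof (Hn xs o); nra).
    assert (Hrq : (2 * INR q + 1) * (R / N) ^ 2 <= R ^ 2 / 2).
    { replace ((2 * INR q + 1) * (R / N) ^ 2) with ((2 * INR q + 1) / N ^ 2 * R ^ 2)
        by (field; lra).
      replace (R ^ 2 / 2) with (/ 2 * R ^ 2) by field.
      apply Rmult_le_compat_r; [apply pow2_ge_0 |].
      apply Rle_div_l; [apply pow_lt; lra |]. unfold N. pose proof (pos_INR q). nra. }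
    apply (iter_laplacian_pointwise_bound G rho o s (R / N) u) with (R := R); auto; try lra.
    - intros L HL. apply (l2_growth_bound G rho u o x1 Cu k Cg alpha); auto; lra.
    - replace (R - (2 * INR q + 1) * (R / N) - (2 * INR q + 2) * s) with (R / N - N * s)
        by (unfold N; field; pose proof (pos_INR q); lra).
      assert (rho xs o + N * s <= R / N) by (apply Rle_div_r; lra). lra. }
  assert (Hm : 0 < ms G xs) by apply ms_pos.
  assert (Hv0 : ms G xs * v ^ 2 = 0)
    by (pose proof (Rmult_le_pos _ _ (Rlt_le _ _ Hm) (pow2_ge_0 v)); lra).
  apply Rmult_integral in Hv0 as [| Hv0]; [lra |].
  destruct (Req_dec v 0) as [| Hnz]; auto. exfalso. now apply (pow_nonzero v 2 Hnz).
Qed.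

Lemma Derive_n_iter_laplacian {V} (G : wgraph V) u : heat_sol G u ->
  forall j x t, t < 0 -> Derive_n (u x) j t = iter_laplacian G u j x t.
Proof.
  intros Hu j. induction j as [|j IH]; intros x t Ht; [reflexivity |].
  simpl. rewrite (Derive_ext_loc _ (iter_laplacian G u j x)).
  - apply is_derive_unique. now apply heat_sol_iter_laplacian.
  - assert (He : 0 < - t) by lra. exists (mkposreal _ He). intros y Hy.
    apply IH. change (Rabs (y - t) < - t) in Hy. unfold Rabs in Hy.
    destruct Rcase_abs in Hy; lra.
Qed.

Lemma continuous_poly (d : nat -> R) n t :
  continuous (fun s => sumL (map (fun i => d i * s ^ i) (seq 0 n))) t.
Proof.
  apply (continuous_sumL (fun i s => d i * s ^ i)). intros i _.
  apply continuous_Rmult_l, (ex_derive_continuous (fun s => s ^ i)).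
  eexists. apply (is_derive_pow (fun s => s) i t 1), (is_derive_id t).
Qed.

Lemma is_derive_poly_primitive (d : nat -> R) n t :
  is_derive (fun s => sumL (map (fun i => d i / (INR i + 1) * s ^ S i) (seq 0 n))) t
            (sumL (map (fun i => d i * t ^ i) (seq 0 n))).
Proof.
  apply (is_derive_sumL (fun i s => d i / (INR i + 1) * s ^ S i)). intros i _.
  eapply is_derive_eq_val;
    [apply is_derive_scal, (is_derive_pow (fun s => s) (S i) t 1), (is_derive_id t) |].
  rewrite S_INR. simpl pred. pose proof (pos_INR i). field. lra.
Qed.

Lemma eq_of_derive_eq_neg (f g : R -> R) :
  (forall t, t < 0 -> exists l, is_derive f t l /\ is_derive g t l) ->
  forall t, t < 0 -> f t - g t = f (-1) - g (-1).
Proof.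
  intros H t Ht.
  assert (Hd : forall y, y < 0 -> is_derive (fun s => f s - g s) y 0).
  { intros y Hy. destruct (H y Hy) as [l [Hf Hg]].
    eapply is_derive_eq_val; [exact (is_derive_Rminus f g y l l Hf Hg) | ring]. }
  destruct (MVT_gen (fun s => f s - g s) t (-1) (fun _ => 0)) as [z [_ Hz]].
  - intros y Hy. apply Hd.
    apply Rlt_le_trans with (1 := proj2 Hy). apply Rmax_lub; lra.
  - intros y Hy. apply continuity_pt_filterlim, (ex_derive_continuous (fun s => f s - g s)).
    eexists. apply Hd. apply Rle_lt_trans with (1 := proj2 Hy). apply Rmax_lub_lt; lra.
  - lra.
Qed.

Lemma sumL_seq_S (e : nat -> R) t n :
  sumL (map (fun i => e i * t ^ i) (seq 0 (S n))) =
  e O + sumL (map (fun i => e (S i) * t ^ S i) (seq 0 n)).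
Proof. simpl. rewrite <- seq_shift, map_map. simpl. ring. Qed.

Lemma polynomial_of_vanishing_derivative (n : nat) (f : nat -> R -> R) :
  (forall j t, t < 0 -> is_derive (f j) t (f (S j) t)) -> (forall t, t < 0 -> f n t = 0) ->
  exists d : nat -> R, forall t, t < 0 -> f O t = sumL (map (fun i => d i * t ^ i) (seq 0 n)).
Proof.
  revert f. induction n as [|n IH]; intros f Hd Hz.
  - exists (fun _ => 0). intros t Ht. simpl. now apply Hz.
  - destruct (IH (fun j => f (S j))) as [d Hdd]; auto.
    set (P := fun s => sumL (map (fun i => d i / (INR i + 1) * s ^ S i) (seq 0 n))).
    assert (Hc : forall t, t < 0 -> f O t - P t = f O (-1) - P (-1)).
    { apply eq_of_derive_eq_neg. intros y Hy. exists (f 1%nat y). split; [now apply Hd |].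
      rewrite Hdd by auto. apply is_derive_poly_primitive. }
    exists (fun i => match i with O => f O (-1) - P (-1) | S i => d i / (INR i + 1) end).
    intros t Ht. rewrite sumL_seq_S, <- (Hc t Ht). unfold P. ring.
Qed.
Lemma left_derive_left_continuous (f : R -> R) l :
  is_left_derive f 0 l -> filterlim f (at_left 0) (locally (f 0)).
Proof.
  intros Hd.
  assert (Hh : filterlim (fun h : R => h) (at_left 0) (locally 0))
    by apply (filterlim_filter_le_1 _ (filter_le_within _) (filterlim_id _ _)).
  assert (Hq : filterlim (fun h => (f (0 + h) - f 0) / h) (at_left 0) (locally l)) by exact Hd.
  assert (Hhq : filterlim (fun h => f 0 + h * ((f (0 + h) - f 0) / h)) (at_left 0)
                  (locally (f 0 + 0 * l))).
  { apply (filterlim_comp_2 (G := locally (f 0)) (H := locally (0 * l))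
           (fun _ => f 0) (fun h => h * ((f (0 + h) - f 0) / h)) Rplus).
    - apply filterlim_const.
    - apply (filterlim_comp_2 (G := locally 0) (H := locally l)
               (fun h => h) (fun h => (f (0 + h) - f 0) / h) Rmult); auto.
      apply (filterlim_mult (K := R_AbsRing)).
    - apply (filterlim_plus (V := R_NormedModule)). }
  rewrite Rmult_0_l, Rplus_0_r in Hhq.
  apply (filterlim_ext_loc _ _ (F := at_left 0)) with (2 := Hhq).
  exists (mkposreal 1 Rlt_0_1). intros h _ Hh0. rewrite Rplus_0_l. field. lra.
Qed.

Lemma eq_at_0_of_left_derive (f g : R -> R) l :
  is_left_derive f 0 l -> continuous g 0 ->
  (forall t, t < 0 -> f t = g t) -> f 0 = g 0.
Proof.
  intros Hf Hg Heq.
  assert (Hg' : filterlim f (at_left 0) (locally (g 0))).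
  { apply (filterlim_ext_loc g f (F := at_left 0)).
    - exists (mkposreal 1 Rlt_0_1). intros h _ Hh. symmetry. now apply Heq.
    - apply (filterlim_filter_le_1 _ (filter_le_within _) Hg). }
  exact (filterlim_locally_unique (F := at_left 0) f _ _
           (left_derive_left_continuous f l Hf) Hg').
Qed.

Theorem corollary3p2 (V : Type) (G : wgraph V) (rho : V -> V -> R)
  (alpha k : R) (u : V -> R -> R) (q : nat) :
  intrinsic G rho -> finite_balls rho -> finite_jump G rho ->
  poly_growth_with G rho alpha ->
  0 < k -> in_Pk G rho k u ->
  4 * INR q > 2 * k + alpha + 2 ->
  (forall x t, t < 0 -> Derive_n (u x) q t = 0) /\
  exists p : nat -> V -> R, forall x t, t <= 0 ->
    u x t = sumL (map (fun i => p i x * t ^ i) (seq 0 q)).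
Proof.
  intros Hi Hf Hj Hg Hk HP Hq.
  pose proof (iter_laplacian_vanishes G rho alpha k u q Hi Hf Hj Hg Hk HP Hq) as Hz.
  destruct HP as [Hu _].
  assert (Hsol : heat_sol G u) by (intros x t Ht; now apply Hu).
  split.
  - intros x t Ht. rewrite (Derive_n_iter_laplacian G u Hsol q x t Ht). now apply Hz.
  - destruct (choice (fun x (d : nat -> R) => forall t, t < 0 ->
                        u x t = sumL (map (fun i => d i * t ^ i) (seq 0 q)))) as [p Hp].
    { intros x. apply (polynomial_of_vanishing_derivative q (fun j => iter_laplacian G u j x)).
      - intros j t Ht. now apply heat_sol_iter_laplacian.
      - intros t Ht. now apply Hz. }
    exists (fun i x => p x i). intros x t Ht.
    destruct (Rlt_or_le t 0) as [Hlt | Hge]; [now apply Hp |].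
    replace t with 0 by lra.
    apply (eq_at_0_of_left_derive (u x) (fun s => sumL (map (fun i => p x i * s ^ i) (seq 0 q)))
             _ (proj2 (Hu x))); [apply continuous_poly | apply Hp].
Qed.
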